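(* Let $0<b<1$ and $\varrho\ge0$ a function on $[0,b]$ with $\varrho/\zeta$ non-decreasing and bounded on $[0,b]$. Let $u\in C^{0,1}([0,b])$ and $\lambda\in\mathbb{R}$ satisfy $u'+(\frac1x+\widetilde\varrho)u+\lambda\zeta=0$ a.e. on $(0,b)$ with $u(0)=0$, $u(b)=1$. Then (i) $u(t)\ge t/b$ for all $t\in[0,b]$; (ii) if $\varrho\not\equiv0$ on $[0,b)$, then $u(t)>t/b$ for all $t\in(0,b)$.
   Context: $\zeta(t)=\frac2{1-t^2}$, $\widetilde\varrho(t)=t\zeta(t)+\varrho(t)$. (The function $t\mapsto t/b$ is the solution of the same problem when $\varrho\equiv0$.) *)

From Stdlib Require Import Reals Lra.
Open Scope R_scope.

Definition zeta (t : R) : R := 2 / (1 - t ^ 2).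

Definition rho_tilde (rho : R -> R) (t : R) : R := t * zeta t + rho t.

Definition null_set (N : R -> Prop) : Prop :=
  forall eps : R, 0 < eps ->
    exists a c : nat -> R,
      (forall n, a n <= c n) /\
      (forall x, N x -> exists n, a n <= x <= c n) /\
      (forall n, sum_f_R0 (fun k => c k - a k) n <= eps).

Definition lipschitz_on (a b : R) (u : R -> R) : Prop :=
  exists L : R, forall x y, a <= x <= b -> a <= y <= b ->
    Rabs (u x - u y) <= L * Rabs (x - y).

From Coquelicot Require Import Coquelicot.
From Stdlib Require Import Reals Lra Classical.
Open Scope R_scope.

(* With [q x = u x / x] the equation reads [q' = - (zeta / x) P] a.e., where
   [P x = (1 + x rho x / zeta x) q x + lambda].  Since [u] is Lipschitz with [u 0 = 0],
   [q] is bounded, so [q] (or [- q]) cannot have derivative [>= d / x], [d > 0], on an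
   interval [(0, t0)]: it would grow like [d ln].  Comparing [q] with suitable levels, this
   excludes [lambda > 0] and then [P < 0] anywhere; hence [q] is nonincreasing and
   [q >= q b = 1 / b].  If [u t = t / b] inside, [q] is constant on [[t, b]], so [P = 0]
   there and [x rho x / zeta x] is a.e. constant, which is impossible once [rho x > 0] for
   some [x < b], because [rho / zeta] is nondecreasing.  Monotonicity is deduced from
   a.e. derivative information through one-sided Lipschitz bounds and a covering of the
   exceptional null set. *)

Lemma sum_f_R0_ge_term (a : nat -> R) (n : nat) :
  (forall k, 0 <= a k) -> a n <= sum_f_R0 a n.
Proof.
intro Ha. destruct n as [|n]; simpl; [lra|].
pose proof (cond_pos_sum a n Ha). lra.
Qed.

Lemma Series_nonneg_bounded (a : nat -> R) (M : R) :
  (forall k, 0 <= a k) -> (forall n, sum_f_R0 a n <= M) ->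
  ex_series a /\ (forall n, sum_f_R0 a n <= Series a) /\ Series a <= M.
Proof.
intros Ha HM.
assert (Hex : ex_series a).
{ apply ex_series_Reals_1, growing_cv.
  - intro n. simpl. specialize (Ha (S n)). lra.
  - exists M. intros x [n ->]. apply HM. }
assert (Hlim : Lim_seq (sum_n a) = Finite (Series a))
  by (apply is_lim_seq_unique, Series_correct, Hex).
split; [exact Hex | split].
- intro n. rewrite <- sum_n_Reals.
  assert (H := Lim_seq_le_loc (fun _ => sum_n a n) (sum_n a)).
  rewrite Lim_seq_const, Hlim in H. apply H.
  exists n. intros m Hm. rewrite !sum_n_Reals.
  induction Hm as [|m Hm IH]; simpl; [lra|]. specialize (Ha (S m)). lra.
- assert (H := Lim_seq_le_loc (sum_n a) (fun _ => M)).
  rewrite Lim_seq_const, Hlim in H. apply H.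
  exists 0%nat. intros n _. rewrite sum_n_Reals. apply HM.
Qed.

Definition overlap_length (a c y : R) : R := Rmax 0 (Rmin y c - a).

Lemma overlap_length_bounds (a c y : R) : a <= c -> 0 <= overlap_length a c y <= c - a.
Proof.
intro Hac. unfold overlap_length. split; [apply Rmax_l|].
apply Rmax_lub; [lra|]. pose proof (Rmin_r y c). lra.
Qed.

Lemma overlap_length_le (a c y w : R) : y <= w -> overlap_length a c y <= overlap_length a c w.
Proof.
intro Hyw. unfold overlap_length, Rmin, Rmax.
destruct (Rle_dec y c), (Rle_dec w c), (Rle_dec 0 (y - a)), (Rle_dec 0 (w - a)),
  (Rle_dec 0 (c - a)); lra.
Qed.

Lemma overlap_length_inside (a c z w : R) : a <= z -> z <= w -> w <= c ->
  overlap_length a c w - overlap_length a c z = w - z.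
Proof.
intros Haz Hzw Hwc. unfold overlap_length.
rewrite (Rmin_left w), (Rmin_left z), !Rmax_right by lra. ring.
Qed.

(* [Phi y] is the total length of the parts left of [y] of a cover of [N] by intervals
   of total length [<= eps]; each interval is enlarged to the right so that [Phi] grows
   at unit rate on a right neighbourhood of every point of [N]. *)
Lemma null_set_cover_function (N : R -> Prop) (eps : R) : null_set N -> 0 < eps ->
  exists Phi : R -> R,
    (forall y, 0 <= Phi y <= eps) /\
    (forall y w, y <= w -> Phi y <= Phi w) /\
    (forall z, N z -> exists d, 0 < d /\
       forall w, z < w < z + d -> w - z <= Phi w - Phi z).
Proof.
intros HN Heps.
destruct (HN (eps / 2) ltac:(lra)) as (a & c & Hac & Hcov & Hsum).
set (c' k := c k + eps / 4 * (/ 2) ^ k).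
assert (Hcc : forall k, c k < c' k).
{ intro k. unfold c'. pose proof (pow_lt (/ 2) k ltac:(lra)). nra. }
set (piece k y := overlap_length (a k) (c' k) y).
assert (Hpiece : forall k y, 0 <= piece k y <= c' k - a k).
{ intros k y. apply overlap_length_bounds. specialize (Hac k). specialize (Hcc k). lra. }
assert (Hlen : forall n, sum_f_R0 (fun k => c' k - a k) n <= eps).
{ intro n. unfold c'.
  rewrite (sum_eq _ (fun k => (c k - a k) + (/ 2) ^ k * (eps / 4))) by (intros; ring).
  rewrite sum_plus, <- scal_sum, tech3 by lra.
  specialize (Hsum n). pose proof (pow_lt (/ 2) (S n) ltac:(lra)).
  replace ((1 - (/ 2) ^ S n) / (1 - / 2)) with (2 - 2 * (/ 2) ^ S n) by field.
  nra. }
assert (HPhi : forall y, ex_series (fun k => piece k y) /\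
          (forall n, sum_f_R0 (fun k => piece k y) n <= Series (fun k => piece k y)) /\
          Series (fun k => piece k y) <= eps).
{ intro y. apply Series_nonneg_bounded; [intro k; apply Hpiece|].
  intro n. eapply Rle_trans; [|apply (Hlen n)]. apply sum_Rle. intros k _. apply Hpiece. }
exists (fun y => Series (fun k => piece k y)).
assert (Hincr : forall n y w, y <= w ->
          piece n w - piece n y <= Series (fun k => piece k w) - Series (fun k => piece k y)).
{ intros n y w Hyw.
  destruct (HPhi y) as [Hy _]. destruct (HPhi w) as [Hw _].
  assert (Hd : forall k, 0 <= piece k w - piece k y)
    by (intro k; pose proof (overlap_length_le (a k) (c' k) y w Hyw); unfold piece; lra).
  destruct (Series_nonneg_bounded (fun k => piece k w - piece k y) eps Hd) as [_ [Hge _]].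
  { intro m. eapply Rle_trans; [|apply (Hlen m)]. apply sum_Rle. intros k _.
    pose proof (Hpiece k y). pose proof (Hpiece k w). lra. }
  rewrite <- Series_minus by assumption.
  eapply Rle_trans; [apply (sum_f_R0_ge_term _ n Hd)|apply Hge]. }
split; [|split].
- intro y. destruct (HPhi y) as [_ [Hge Hle]]. split; [|exact Hle].
  eapply Rle_trans; [|apply (Hge 0%nat)]. apply Hpiece.
- intros y w Hyw. specialize (Hincr 0%nat y w Hyw).
  pose proof (overlap_length_le (a 0%nat) (c' 0%nat) y w Hyw). unfold piece in *. lra.
- intros z Hz. destruct (Hcov z Hz) as [n Hn]. exists (c' n - z).
  split; [specialize (Hcc n); lra|].
  intros w Hw. specialize (Hincr n z w ltac:(lra)).
  unfold piece in Hincr. rewrite overlap_length_inside in Hincr by lra. exact Hincr.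
Qed.

Lemma real_induction (s t : R) (C : R -> Prop) : s <= t -> C s ->
  (forall z, s < z <= t -> (forall w, s <= w < z -> C w) -> C z) ->
  (forall z, s <= z < t -> C z ->
     exists d, 0 < d /\ forall w, z < w < z + d -> w <= t -> C w) ->
  C t.
Proof.
intros Hst Hs Hleft Hright.
set (E y := s <= y <= t /\ forall w, s <= w <= y -> C w).
assert (Es : E s) by (split; [lra|intros w Hw; replace w with s by lra; exact Hs]).
destruct (completeness E) as [z [Hub Hlub]].
{ exists t. intros y [Hy _]. lra. }
{ exists s. exact Es. }
assert (Hsz : s <= z) by (apply Hub, Es).
assert (Hzt : z <= t) by (apply Hlub; intros y [Hy _]; lra).
assert (Hbelow : forall w, s <= w < z -> C w).
{ intros w Hw. apply NNPP. intro HCw.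
  assert (z <= w); [|lra].
  apply Hlub. intros y [_ Ey]. apply Rnot_lt_le. intro Hwy. apply HCw, Ey. lra. }
assert (Hz : C z).
{ destruct (Req_dec z s) as [-> | Hzs]; [exact Hs|]. apply Hleft; [lra | exact Hbelow]. }
destruct (Req_dec z t) as [<- | Hzt']; [exact Hz|].
destruct (Hright z ltac:(lra) Hz) as [d [Hd Habove]].
set (w0 := z + Rmin d (t - z) / 2).
assert (0 < Rmin d (t - z)) by (apply Rmin_glb_lt; lra).
pose proof (Rmin_l d (t - z)). pose proof (Rmin_r d (t - z)).
assert (Ew0 : E w0).
{ split; [unfold w0; lra|]. intros w Hw.
  destruct (Rlt_or_le w z) as [Hwz|Hwz]; [apply Hbelow; lra|].
  destruct (Req_dec w z) as [-> | Hwz']; [exact Hz|]. apply Habove; unfold w0 in *; lra. }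
specialize (Hub w0 Ew0). unfold w0 in Hub. lra.
Qed.

Definition one_sided_lipschitz (K s t : R) (f : R -> R) : Prop :=
  forall x y, s <= x -> x <= y -> y <= t -> f x - K * (y - x) <= f y.

Definition right_dini_nonneg (f : R -> R) (x : R) : Prop :=
  forall e, 0 < e -> exists d, 0 < d /\
    forall y, x < y < x + d -> f x - e * (y - x) <= f y.

(* The comparison function [f y + e (y - s) + K Phi y] is propagated rightwards by real
   induction: off [N] the Dini bound absorbs the decrease of [f], on [N] the growth of the
   cover function [Phi] does. *)
Lemma nondecreasing_of_dini_ae (f : R -> R) (N : R -> Prop) (K s t : R) :
  s <= t -> 0 <= K -> null_set N -> one_sided_lipschitz K s t f ->
  (forall x, s <= x < t -> ~ N x -> right_dini_nonneg f x) -> f s <= f t.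
Proof.
intros Hst HK HN Hf Hdini.
apply Rle_plus_epsilon. intros eps Heps.
set (e := eps / (2 * (t - s + 1))).
assert (He : 0 < e) by (unfold e; apply Rdiv_lt_0_compat; lra).
destruct (null_set_cover_function N (eps / (2 * (K + 1))) HN)
  as (Phi & HPhi & HPhi_mono & HPhi_N).
{ apply Rdiv_lt_0_compat; lra. }
set (C y := f s <= f y + e * (y - s) + K * Phi y).
assert (HCt : C t).
{ apply real_induction with (s := s); [exact Hst| | |].
  - unfold C. specialize (HPhi s). nra.
  - intros z Hz Hbelow. unfold C. apply Rle_plus_epsilon. intros del Hdel.
    set (h := Rmin (z - s) (del / (K + 1))).
    assert (Hh : 0 < h) by (apply Rmin_glb_lt; [lra | apply Rdiv_lt_0_compat; lra]).
    assert (Hh1 : h <= z - s) by apply Rmin_l.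
    assert (Hh2 : h * (K + 1) <= del).
    { pose proof (Rmin_r (z - s) (del / (K + 1))) as Hmin. fold h in Hmin.
      replace del with (del / (K + 1) * (K + 1)) by (field; lra). nra. }
    specialize (Hbelow (z - h) ltac:(lra)).
    specialize (Hf (z - h) z ltac:(lra) ltac:(lra) ltac:(lra)).
    specialize (HPhi_mono (z - h) z ltac:(lra)). unfold C in Hbelow. nra.
  - intros z Hz HCz. destruct (classic (N z)) as [Nz | Nz].
    + destruct (HPhi_N z Nz) as [d [Hd Hgrow]]. exists d. split; [exact Hd|].
      intros w Hw Hwt. specialize (Hgrow w Hw).
      specialize (Hf z w ltac:(lra) ltac:(lra) Hwt). unfold C in *. nra.
    + destruct (Hdini z Hz Nz e He) as [d [Hd Hright]]. exists d. split; [exact Hd|].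
      intros w Hw Hwt. specialize (Hright w Hw).
      specialize (HPhi_mono z w ltac:(lra)). unfold C in *. nra. }
unfold C in HCt. specialize (HPhi t).
assert (e * (t - s) <= eps / 2).
{ unfold e. replace (eps / (2 * (t - s + 1)) * (t - s)) with (eps / 2 * ((t - s) / (t - s + 1)))
    by (field; lra).
  assert ((t - s) / (t - s + 1) <= 1) by (apply Rle_div_l; lra). nra. }
assert (K * Phi t <= eps / 2).
{ assert (K * (eps / (2 * (K + 1))) <= eps / 2); [|nra].
  replace (K * (eps / (2 * (K + 1)))) with (eps / 2 * (K / (K + 1))) by (field; lra).
  assert (K / (K + 1) <= 1) by (apply Rle_div_l; lra). nra. }
lra.
Qed.

Lemma right_dini_nonneg_of_derivative (f : R -> R) (x l : R) :
  derivable_pt_lim f x l -> 0 <= l -> right_dini_nonneg f x.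
Proof.
intros Hf Hl e He. destruct (Hf e He) as [d Hd]. exists d. split; [apply cond_pos|].
intros y Hy.
assert (Hq := Hd (y - x) ltac:(lra) ltac:(rewrite Rabs_pos_eq; lra)).
replace (x + (y - x)) with y in Hq by ring.
apply Rabs_def2 in Hq. destruct Hq as [_ Hq].
assert (Hslope : - e <= (f y - f x) / (y - x)) by lra.
apply Rle_div_r in Hslope; lra.
Qed.

Lemma one_sided_lipschitz_min (K s t m : R) (f : R -> R) :
  0 <= K -> one_sided_lipschitz K s t f -> one_sided_lipschitz K s t (fun y => Rmin (f y) m).
Proof.
intros HK Hf x y Hx Hxy Hy. specialize (Hf x y Hx Hxy Hy).
assert (0 <= K * (y - x)) by (apply Rmult_le_pos; lra).
unfold Rmin. destruct (Rle_dec (f x) m), (Rle_dec (f y) m); lra.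
Qed.

Lemma right_dini_nonneg_min (f : R -> R) (x m : R) :
  right_dini_nonneg f x -> right_dini_nonneg (fun y => Rmin (f y) m) x.
Proof.
intros Hf e He. destruct (Hf e He) as [d [Hd Hy]]. exists d. split; [exact Hd|].
intros y Hxy. specialize (Hy y Hxy).
assert (0 <= e * (y - x)) by (apply Rmult_le_pos; lra).
unfold Rmin. destruct (Rle_dec (f x) m), (Rle_dec (f y) m); lra.
Qed.

(* Above the level [m], [Rmin f m] is locally constant: [f] cannot drop below [m] at once. *)
Lemma right_dini_nonneg_min_above (f : R -> R) (x t m K : R) :
  0 <= K -> x < t -> m < f x -> one_sided_lipschitz K x t f ->
  right_dini_nonneg (fun y => Rmin (f y) m) x.
Proof.
intros HK Hxt Hm Hf e He.
set (d := Rmin (t - x) ((f x - m) / (K + 1))).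
assert (Hd : 0 < d) by (apply Rmin_glb_lt; [lra | apply Rdiv_lt_0_compat; lra]).
exists d. split; [exact Hd|]. intros y Hy.
pose proof (Rmin_l (t - x) ((f x - m) / (K + 1))) as Hd1.
pose proof (Rmin_r (t - x) ((f x - m) / (K + 1))) as Hd2. fold d in Hd1, Hd2.
specialize (Hf x y ltac:(lra) ltac:(lra) ltac:(lra)).
assert (K * (y - x) < f x - m).
{ apply Rle_lt_trans with (K * d); [apply Rmult_le_compat_l; lra|].
  apply Rle_lt_trans with (K * ((f x - m) / (K + 1))); [apply Rmult_le_compat_l; lra|].
  replace (K * ((f x - m) / (K + 1))) with ((f x - m) * (K / (K + 1))) by (field; lra).
  assert (K / (K + 1) < 1) by (apply Rlt_div_l; lra). nra. }
assert (0 <= e * (y - x)) by (apply Rmult_le_pos; lra).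
unfold Rmin. destruct (Rle_dec (f x) m), (Rle_dec (f y) m); lra.
Qed.

Lemma min_nondecreasing_of_dini_below (f : R -> R) (N : R -> Prop) (K s t m : R) :
  s <= t -> 0 <= K -> null_set N -> one_sided_lipschitz K s t f ->
  (forall x, s <= x < t -> ~ N x -> f x <= m -> right_dini_nonneg f x) ->
  Rmin (f s) m <= Rmin (f t) m.
Proof.
intros Hst HK HN Hf Hdini.
apply (nondecreasing_of_dini_ae (fun y => Rmin (f y) m) N K); try assumption.
- apply one_sided_lipschitz_min; assumption.
- intros x Hx Nx. destruct (Rle_or_lt (f x) m) as [Hfx | Hfx].
  + apply right_dini_nonneg_min, Hdini; assumption.
  + apply (right_dini_nonneg_min_above f x t m K HK); [lra | exact Hfx|].
    intros y z Hy Hyz Hz. apply Hf; lra.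
Qed.

Lemma null_set_not_interval (N : R -> Prop) (a b : R) :
  null_set N -> a < b -> exists x, a < x < b /\ ~ N x.
Proof.
intros HN Hab. apply NNPP. intro Hall.
assert (H := nondecreasing_of_dini_ae (fun y => - y) N 1 ((3 * a + b) / 4) ((a + 3 * b) / 4)).
assert (- ((3 * a + b) / 4) <= - ((a + 3 * b) / 4)); [|lra].
apply H; try lra; [exact HN | intros x y _ _ _; lra |].
intros x Hx Nx. exfalso. apply Hall. exists x. split; [lra | exact Nx].
Qed.

Lemma ln_le_sub_1 (z : R) : 0 < z -> ln z <= z - 1.
Proof.
intro Hz. rewrite <- (ln_exp (z - 1)). apply ln_le; [exact Hz|].
pose proof (exp_ineq1_le (z - 1)). lra.
Qed.

Lemma one_sided_lipschitz_sub_ln (K s t c : R) (f : R -> R) :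
  0 < s -> 0 <= c -> one_sided_lipschitz K s t f ->
  one_sided_lipschitz (K + c / s) s t (fun y => f y - c * ln y).
Proof.
intros Hs Hc Hf x y Hx Hxy Hy. specialize (Hf x y Hx Hxy Hy).
assert (Hln : ln y - ln x <= (y - x) / s).
{ rewrite <- ln_div by lra.
  apply Rle_trans with (y / x - 1); [apply ln_le_sub_1, Rdiv_lt_0_compat; lra|].
  replace (y / x - 1) with ((y - x) / x) by (field; lra).
  apply Rmult_le_compat_l; [lra | apply Rinv_le_contravar; lra]. }
assert (c * (ln y - ln x) <= c * ((y - x) / s)) as Hcln by (apply Rmult_le_compat_l; lra).
replace (c * ((y - x) / s)) with (c / s * (y - x)) in Hcln by (field; lra).
rewrite Rmult_minus_distr_l in Hcln. rewrite Rmult_plus_distr_r. lra.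
Qed.

Lemma bounded_sub_ln_not_nondecreasing (g : R -> R) (t0 d M : R) :
  0 < t0 -> 0 < d -> (forall s, 0 < s <= t0 -> Rabs (g s) <= M) ->
  ~ (forall s, 0 < s <= t0 -> g s - d * ln s <= g t0 - d * ln t0).
Proof.
intros Ht0 Hd Hg Hmono.
set (s := t0 * exp (- (2 * M / d) - 1)).
assert (HM : 0 <= M) by (pose proof (Hg t0 ltac:(lra)); pose proof (Rabs_pos (g t0)); lra).
assert (Hexp : exp (- (2 * M / d) - 1) < 1).
{ assert (0 <= 2 * M / d) by (apply Rdiv_le_0_compat; lra).
  rewrite <- exp_0 at 2. apply exp_increasing. lra. }
assert (Hs : 0 < s <= t0).
{ unfold s. pose proof (exp_pos (- (2 * M / d) - 1)). split; [apply Rmult_lt_0_compat|]; nra. }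
specialize (Hmono s Hs). unfold s in Hmono at 2.
rewrite ln_mult, ln_exp in Hmono by (try apply exp_pos; lra).
pose proof (proj1 (Rabs_le_between _ _) (Hg s Hs)).
pose proof (proj1 (Rabs_le_between _ _) (Hg t0 ltac:(lra))).
replace (d * (ln t0 + (- (2 * M / d) - 1))) with (d * ln t0 - 2 * M - d) in Hmono
  by (field; lra).
lra.
Qed.

Lemma unbounded_of_derivative_ge_inv (g : R -> R) (N : R -> Prop) (t0 d M : R) :
  0 < t0 -> 0 < d -> null_set N ->
  (forall s, 0 < s -> exists K, 0 <= K /\ one_sided_lipschitz K s t0 g) ->
  (forall x, 0 < x < t0 -> ~ N x -> exists dg, derivable_pt_lim g x dg /\ d / x <= dg) ->
  ~ (forall s, 0 < s <= t0 -> Rabs (g s) <= M).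
Proof.
intros Ht0 Hd HN Hlip Hder Hbnd.
apply (bounded_sub_ln_not_nondecreasing g t0 d M Ht0 Hd Hbnd).
intros s Hs. destruct (Hlip s ltac:(lra)) as [K [HK Hg]].
apply (nondecreasing_of_dini_ae (fun y => g y - d * ln y) N (K + d / s)); try lra.
- assert (0 <= d / s) by (apply Rdiv_le_0_compat; lra). lra.
- exact HN.
- apply one_sided_lipschitz_sub_ln; lra || exact Hg.
- intros x Hx Nx. destruct (Hder x ltac:(lra) Nx) as [dg [Hdg Hge]].
  apply (right_dini_nonneg_of_derivative _ x (dg - d * / x)).
  + apply (derivable_pt_lim_minus g (mult_real_fct d ln)); [exact Hdg|].
    apply derivable_pt_lim_scal, derivable_pt_lim_ln. lra.
  + unfold Rdiv in Hge. lra.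
Qed.

Lemma one_sided_lipschitz_of_lipschitz (K s t : R) (f : R -> R) :
  (forall x y, s <= x -> x <= y -> y <= t -> Rabs (f y - f x) <= K * (y - x)) ->
  one_sided_lipschitz K s t f /\ one_sided_lipschitz K s t (fun y => - f y).
Proof.
intro Hf. split; intros x y Hx Hxy Hy;
  pose proof (proj1 (Rabs_le_between _ _) (Hf x y Hx Hxy Hy)); lra.
Qed.

Lemma zeta_ge_2 (x : R) : 0 <= x < 1 -> 2 <= zeta x.
Proof.
intro Hx. unfold zeta. apply Rle_div_r; nra.
Qed.

Lemma zeta_scaled_ge (x p d : R) : 0 < x < 1 -> 0 <= d <= p -> 2 * d / x <= zeta x / x * p.
Proof.
intros Hx Hdp. pose proof (zeta_ge_2 x ltac:(lra)).
replace (zeta x / x * p) with (zeta x * p / x) by (field; lra).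
apply Rmult_le_compat_r; [apply Rlt_le, Rinv_0_lt_compat; lra | nra].
Qed.

Lemma lipschitz_quotient_bound (u : R -> R) (L b x : R) :
  (forall x y, 0 <= x <= b -> 0 <= y <= b -> Rabs (u x - u y) <= L * Rabs (x - y)) ->
  u 0 = 0 -> 0 < x <= b -> Rabs (u x / x) <= L.
Proof.
intros HL Hu0 Hx. specialize (HL x 0 ltac:(lra) ltac:(lra)).
rewrite Hu0, !Rminus_0_r, (Rabs_pos_eq x) in HL by lra.
unfold Rdiv. rewrite Rabs_mult, Rabs_inv, (Rabs_pos_eq x) by lra.
apply Rle_div_l; lra.
Qed.

(* [u y / y - u x / x = (u y - u x) / y - (u x / x) (y - x) / y]. *)
Lemma lipschitz_quotient_lipschitz (u : R -> R) (L b s x y : R) :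
  (forall x y, 0 <= x <= b -> 0 <= y <= b -> Rabs (u x - u y) <= L * Rabs (x - y)) ->
  u 0 = 0 -> 0 < s -> s <= x -> x <= y -> y <= b ->
  Rabs (u y / y - u x / x) <= 2 * L / s * (y - x).
Proof.
intros HL Hu0 Hs Hsx Hxy Hyb.
assert (Hdu := HL y x ltac:(lra) ltac:(lra)). rewrite (Rabs_pos_eq (y - x)) in Hdu by lra.
assert (Hq := lipschitz_quotient_bound u L b x HL Hu0 ltac:(lra)).
replace (u y / y - u x / x) with ((u y - u x) / y - u x / x * ((y - x) / y)) by (field; lra).
assert (Hy : (y - x) / y <= (y - x) / s).
{ apply Rmult_le_compat_l; [lra | apply Rinv_le_contravar; lra]. }
assert (Hyx : 0 <= (y - x) / y) by (apply Rdiv_le_0_compat; lra).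
eapply Rle_trans; [apply Rabs_triang|].
rewrite Rabs_Ropp, Rabs_mult, (Rabs_pos_eq ((y - x) / y)) by lra.
unfold Rdiv at 1. rewrite Rabs_mult, Rabs_inv, (Rabs_pos_eq y) by lra.
assert (HL0 : 0 <= L) by (pose proof (Rabs_pos (u x / x)); lra).
assert (Rabs (u y - u x) * / y <= L * ((y - x) / y)).
{ unfold Rdiv. rewrite <- Rmult_assoc.
  apply Rmult_le_compat_r; [apply Rlt_le, Rinv_0_lt_compat; lra | exact Hdu]. }
assert (Rabs (u x / x) * ((y - x) / y) <= L * ((y - x) / y)) by (apply Rmult_le_compat_r; lra).
assert (L * ((y - x) / y) <= L * ((y - x) / s)) by (apply Rmult_le_compat_l; lra).
replace (2 * L / s * (y - x)) with (2 * (L * ((y - x) / s))) by (field; lra).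
lra.
Qed.

(* The identity [zeta x (1 - x^2) = 2] turns the ODE for [u] into the one for [u x / x]. *)
Lemma ode_quotient_derivative (u rho : R -> R) (lambda x : R) : 0 < x < 1 ->
  derivable_pt_lim u x (- ((1 / x + rho_tilde rho x) * u x + lambda * zeta x)) ->
  derivable_pt_lim (fun y => u y / y) x
    (- (zeta x / x) * ((1 + x * (rho x / zeta x)) * (u x / x) + lambda)).
Proof.
intros Hx Hu.
assert (H := derivable_pt_lim_div u id x _ _ Hu (derivable_pt_lim_id x)
               ltac:(unfold id; lra)).
replace (- (zeta x / x) * ((1 + x * (rho x / zeta x)) * (u x / x) + lambda))
  with ((- ((1 / x + rho_tilde rho x) * u x + lambda * zeta x) * id x - 1 * u x) / (id x)²).
- exact H.
- assert (1 - x ^ 2 <> 0) by nra.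
  unfold id, Rsqr, rho_tilde, zeta. field. lra.
Qed.

Lemma derivable_pt_lim_locally_const (f : R -> R) (lo hi c x l : R) :
  lo < x < hi -> (forall y, lo < y < hi -> f y = c) -> derivable_pt_lim f x l -> l = 0.
Proof.
intros Hx Hconst Hf.
apply is_derive_Reals in Hf.
assert (Hc : is_derive (fun _ => c) x l).
{ apply (is_derive_ext_loc f); [|exact Hf].
  apply (locally_interval _ x lo hi); simpl; try lra. intros y Hlo Hhi. apply Hconst. lra. }
apply is_derive_unique in Hc. rewrite <- Hc. apply is_derive_unique, (is_derive_const c).
Qed.

Section QuotientODE.

Variables (b lambda L : R) (rho u : R -> R) (N : R -> Prop).
Hypothesis hb : 0 < b < 1.
Hypothesis hrho_nonneg : forall t, 0 <= t <= b -> 0 <= rho t.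
Hypothesis hrho_mono : forall s t, 0 <= s <= b -> 0 <= t <= b -> s <= t ->
  rho s / zeta s <= rho t / zeta t.
Hypothesis hu_lip : forall x y, 0 <= x <= b -> 0 <= y <= b ->
  Rabs (u x - u y) <= L * Rabs (x - y).
Hypothesis hN : null_set N.
Hypothesis hu_ode : forall x, 0 < x < b -> ~ N x ->
  derivable_pt_lim u x (- ((1 / x + rho_tilde rho x) * u x + lambda * zeta x)).
Hypothesis hu0 : u 0 = 0.
Hypothesis hub : u b = 1.

Let q (x : R) : R := u x / x.
Let r (x : R) : R := rho x / zeta x.
Let P (x : R) : R := (1 + x * r x) * q x + lambda.

Lemma q_b : q b = 1 / b.
Proof. unfold q. rewrite hub. reflexivity. Qed.

Lemma q_bounded (x : R) : 0 < x <= b -> Rabs (q x) <= L.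
Proof. apply (lipschitz_quotient_bound u L b x hu_lip hu0). Qed.

Lemma q_locally_lipschitz (s t : R) : 0 < s -> t <= b ->
  exists K, 0 <= K /\ one_sided_lipschitz K s t q /\ one_sided_lipschitz K s t (fun y => - q y).
Proof.
intros Hs Ht. exists (2 * L / s). split.
- apply Rdiv_le_0_compat; [|exact Hs].
  pose proof (q_bounded b ltac:(lra)). pose proof (Rabs_pos (q b)). lra.
- apply one_sided_lipschitz_of_lipschitz. intros x y Hx Hxy Hy.
  apply (lipschitz_quotient_lipschitz u L b s x y hu_lip hu0); lra.
Qed.

Lemma q_derivative (x : R) : 0 < x < b -> ~ N x ->
  derivable_pt_lim q x (- (zeta x / x) * P x).
Proof. intros Hx Nx. apply ode_quotient_derivative; [lra | exact (hu_ode x Hx Nx)]. Qed.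

Lemma r_nonneg (x : R) : 0 <= x <= b -> 0 <= r x.
Proof.
intro Hx. apply Rdiv_le_0_compat; [apply hrho_nonneg; lra|].
pose proof (zeta_ge_2 x ltac:(lra)). lra.
Qed.

Lemma weight_bounds (s t : R) : 0 <= s <= t -> t <= b -> 1 <= 1 + s * r s <= 1 + t * r t.
Proof.
intros Hs Ht. pose proof (r_nonneg s ltac:(lra)).
assert (r s <= r t) by (apply hrho_mono; lra). nra.
Qed.

Lemma q_rises_where_P_nonpos (x : R) : 0 < x < b -> ~ N x -> P x <= 0 ->
  right_dini_nonneg q x.
Proof.
intros Hx Nx HP. apply (right_dini_nonneg_of_derivative q x _ (q_derivative x Hx Nx)).
assert (0 <= zeta x / x) by (apply Rdiv_le_0_compat; [pose proof (zeta_ge_2 x); lra | lra]).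
nra.
Qed.

Lemma q_falls_where_P_nonneg (x : R) : 0 < x < b -> ~ N x -> 0 <= P x ->
  right_dini_nonneg (fun y => - q y) x.
Proof.
intros Hx Nx HP.
apply (right_dini_nonneg_of_derivative _ x _ (derivable_pt_lim_opp q x _ (q_derivative x Hx Nx))).
assert (0 <= zeta x / x) by (apply Rdiv_le_0_compat; [pose proof (zeta_ge_2 x); lra | lra]).
nra.
Qed.

(* For [lambda > 0], [P > 0] wherever [q >= 0], so [Rmin (- q) 0] is nondecreasing and
   [q >= q b = 1 / b] on [(0, b]]; then [P >= lambda], and [- q] would grow like
   [2 lambda ln]. *)
Lemma lambda_nonpos : lambda <= 0.
Proof.
apply Rnot_lt_le. intro Hl.
assert (Hq : forall s, 0 < s <= b -> 1 / b <= q s).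
{ intros s Hs. destruct (q_locally_lipschitz s b ltac:(lra) ltac:(lra)) as [K [HK [_ Hneg]]].
  assert (Hb : 0 < 1 / b) by (apply Rdiv_lt_0_compat; lra).
  assert (H := min_nondecreasing_of_dini_below (fun y => - q y) N K s b 0
                 ltac:(lra) HK hN Hneg).
  cbv beta in H. rewrite q_b, (Rmin_left (- (1 / b))) in H by lra.
  assert (Rmin (- q s) 0 <= - (1 / b)).
  { apply H. intros x Hx Nx Hqx. apply q_falls_where_P_nonneg; [lra | exact Nx|].
    pose proof (weight_bounds x x ltac:(lra) ltac:(lra)). unfold P. nra. }
  unfold Rmin in *. destruct (Rle_dec (- q s) 0); lra. }
apply (unbounded_of_derivative_ge_inv (fun y => - q y) N b (2 * lambda) L); try lra.
- exact hN.
- intros s Hs. destruct (q_locally_lipschitz s b Hs ltac:(lra)) as [K [HK [_ Hneg]]].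
  exists K. split; assumption.
- intros x Hx Nx. exists (zeta x / x * P x). split.
  + replace (zeta x / x * P x) with (- (- (zeta x / x) * P x)) by ring.
    apply derivable_pt_lim_opp, q_derivative; assumption.
  + apply zeta_scaled_ge; [lra|]. pose proof (Hq x ltac:(lra)).
    pose proof (weight_bounds x x ltac:(lra) ltac:(lra)).
    assert (0 < 1 / b) by (apply Rdiv_lt_0_compat; lra). unfold P. nra.
- intros s Hs. rewrite Rabs_Ropp. apply q_bounded. exact Hs.
Qed.

(* If [P t0 < 0], then [P <= 0] wherever [q <= m], so [Rmin q m] is nondecreasing and
   [q <= q t0 < m] on [(0, t0]]; then [P <= - d] there, and [q] would grow like [2 d ln]. *)
Lemma P_nonneg (t0 : R) : 0 < t0 < b -> 0 <= P t0.
Proof.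
intro Ht0. apply Rnot_lt_le. intro HPt0.
pose proof lambda_nonpos as Hl.
set (c := q t0). set (A := 1 + t0 * r t0).
assert (HA : 1 <= A) by (pose proof (weight_bounds t0 t0 ltac:(lra) ltac:(lra)); unfold A; lra).
set (m := - lambda / A).
assert (HmA : m * A = - lambda) by (unfold m; field; lra).
assert (Hcm : c < m).
{ unfold P in HPt0. fold c A in HPt0. apply Rnot_le_lt. intro. nra. }
assert (Hbelow : forall s, 0 < s <= t0 -> q s <= c).
{ intros s Hs. destruct (q_locally_lipschitz s t0 ltac:(lra) ltac:(lra)) as [K [HK [Hpos _]]].
  assert (H := min_nondecreasing_of_dini_below q N K s t0 m ltac:(lra) HK hN Hpos).
  fold c in H. rewrite (Rmin_left c) in H by lra.
  assert (Rmin (q s) m <= c).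
  { apply H. intros x Hx Nx Hqx. apply q_rises_where_P_nonpos; [lra | exact Nx|].
    pose proof (weight_bounds x t0 ltac:(lra) ltac:(lra)) as Hw. fold A in Hw.
    unfold P. destruct (Rle_or_lt 0 (q x)); nra. }
  unfold Rmin in *. destruct (Rle_dec (q s) m); lra. }
set (d := - lambda - Rmax (A * c) c).
assert (Hd : 0 < d).
{ unfold P in HPt0. fold c A in HPt0. unfold d.
  destruct (Rle_or_lt 0 c); [rewrite Rmax_left by nra | rewrite Rmax_right by nra]; lra. }
apply (unbounded_of_derivative_ge_inv q N t0 (2 * d) L); try lra.
- exact hN.
- intros s Hs. destruct (q_locally_lipschitz s t0 Hs ltac:(lra)) as [K [HK [Hpos _]]].
  exists K. split; assumption.
- intros x Hx Nx. exists (- (zeta x / x) * P x). split; [apply q_derivative; [lra | exact Nx]|].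
  replace (- (zeta x / x) * P x) with (zeta x / x * - P x) by ring.
  apply zeta_scaled_ge; [lra|]. split; [lra|].
  pose proof (weight_bounds x t0 ltac:(lra) ltac:(lra)) as Hw. fold A in Hw.
  pose proof (Hbelow x ltac:(lra)). pose proof (Rmax_l (A * c) c). pose proof (Rmax_r (A * c) c).
  unfold d, P. destruct (Rle_or_lt 0 (q x)); nra.
- intros s Hs. apply q_bounded. lra.
Qed.

Lemma q_nonincreasing (t t' : R) : 0 < t -> t <= t' -> t' <= b -> q t' <= q t.
Proof.
intros Ht Htt' Ht'b.
destruct (q_locally_lipschitz t t' Ht Ht'b) as [K [HK [_ Hneg]]].
enough (- q t <= - q t') by lra.
apply (nondecreasing_of_dini_ae (fun y => - q y) N K); try assumption.
intros x Hx Nx. apply q_falls_where_P_nonneg; [lra | exact Nx | apply P_nonneg; lra].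
Qed.

Lemma u_ge_linear (t : R) : 0 <= t <= b -> t / b <= u t.
Proof.
intro Ht. destruct (Req_dec t 0) as [-> | Ht0]; [rewrite hu0; unfold Rdiv; lra|].
pose proof (q_nonincreasing t b ltac:(lra) ltac:(lra) ltac:(lra)) as Hq.
rewrite q_b in Hq. unfold q in Hq.
replace (u t) with (t * (u t / t)) by (field; lra).
replace (t / b) with (t * (1 / b)) by (field; lra).
apply Rmult_le_compat_l; lra.
Qed.

Lemma q_flat_of_touch (t : R) : 0 < t -> q t <= 1 / b ->
  forall s, t <= s <= b -> q s = 1 / b.
Proof.
intros Ht Hqt s Hs. rewrite <- q_b in *.
pose proof (q_nonincreasing t s Ht ltac:(lra) ltac:(lra)).
pose proof (q_nonincreasing s b ltac:(lra) ltac:(lra) ltac:(lra)). lra.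
Qed.

Lemma weight_const_of_q_flat (tau : R) : 0 < tau ->
  (forall s, tau <= s <= b -> q s = 1 / b) ->
  forall p, tau < p < b -> ~ N p -> (1 + p * r p) / b + lambda = 0.
Proof.
intros Htau Hflat p Hp Np.
assert (HP : - (zeta p / p) * P p = 0).
{ apply (derivable_pt_lim_locally_const q tau b (1 / b) p); [lra | |].
  - intros y Hy. apply Hflat. lra.
  - apply q_derivative; [lra | exact Np]. }
assert (Hz : zeta p / p <> 0)
  by (pose proof (zeta_ge_2 p ltac:(lra)); apply Rgt_not_eq, Rdiv_lt_0_compat; lra).
destruct (Rmult_integral _ _ HP) as [Hz0 | HP0]; [lra|].
unfold P in HP0. rewrite (Hflat p) in HP0 by lra.
rewrite <- HP0. field. lra.
Qed.

Lemma u_gt_linear : (exists t1, 0 <= t1 < b /\ rho t1 <> 0) ->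
  forall t, 0 < t < b -> t / b < u t.
Proof.
intros [t1 [Ht1 Hrho1]] t Ht. apply Rnot_le_lt. intro Hle.
assert (Hr1 : 0 < r t1).
{ apply Rdiv_lt_0_compat; [pose proof (hrho_nonneg t1 ltac:(lra)); lra|].
  pose proof (zeta_ge_2 t1 ltac:(lra)). lra. }
set (tau := Rmax t t1).
assert (Htau : t <= tau /\ t1 <= tau /\ tau < b).
{ unfold tau, Rmax. destruct (Rle_dec t t1); lra. }
assert (Hflat : forall s, tau <= s <= b -> q s = 1 / b).
{ intros s Hs. apply (q_flat_of_touch t); try lra.
  unfold q. apply Rle_div_l; [lra|].
  replace (1 / b * t) with (t / b) by (field; lra). exact Hle. }
destruct (null_set_not_interval N tau ((tau + b) / 2) hN ltac:(lra)) as [p1 [Hp1 Np1]].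
destruct (null_set_not_interval N ((tau + b) / 2) b hN ltac:(lra)) as [p2 [Hp2 Np2]].
pose proof (weight_const_of_q_flat tau ltac:(lra) Hflat p1 ltac:(lra) Np1) as E1.
pose proof (weight_const_of_q_flat tau ltac:(lra) Hflat p2 ltac:(lra) Np2) as E2.
assert (p1 * r p1 = p2 * r p2).
{ apply (Rmult_eq_reg_r (/ b)); [|apply Rinv_neq_0_compat; lra].
  unfold Rdiv in E1, E2. lra. }
assert (r t1 <= r p1) by (apply hrho_mono; lra).
assert (r p1 <= r p2) by (apply hrho_mono; lra).
nra.
Qed.

End QuotientODE.

Theorem mainTheorem16
  (b : R) (rho u : R -> R) (lambda : R)
  (hb : 0 < b < 1)
  (hrho_nonneg : forall t, 0 <= t <= b -> 0 <= rho t)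
  (hrho_mono : forall s t, 0 <= s <= b -> 0 <= t <= b -> s <= t ->
                 rho s / zeta s <= rho t / zeta t)
  (hrho_bdd : exists M, forall t, 0 <= t <= b -> Rabs (rho t / zeta t) <= M)
  (hu_lip : lipschitz_on 0 b u)
  (hu_ode : exists N : R -> Prop, null_set N /\
              forall x, 0 < x < b -> ~ N x ->
                derivable_pt_lim u x
                  (- ((1 / x + rho_tilde rho x) * u x + lambda * zeta x)))
  (hu0 : u 0 = 0) (hub : u b = 1) :
  (forall t, 0 <= t <= b -> u t >= t / b) /\
  ((exists t, 0 <= t < b /\ rho t <> 0) ->
     forall t, 0 < t < b -> u t > t / b).
Proof.
destruct hu_lip as [L hL]. destruct hu_ode as [N [hN hode]].
split.
- intros t Ht. apply Rle_ge, (u_ge_linear b lambda L rho u N); assumption.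
- intros Hrho t Ht. apply Rlt_gt, (u_gt_linear b lambda L rho u N); assumption.
Qed.
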